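(* For every $h\in\widehat{\operatorname{PC}^{\bowtie}}$ there exist order-preserving homeomorphisms $\phi,\psi$ of $[0,1[$ and elements $f,g\in\widehat{\operatorname{IET}^{\bowtie}}$ such that $h=\psi\circ f=g\circ\phi$.
   Context: $X=[0,1[$. $\widehat{\operatorname{PC}^{\bowtie}}$ is the group of bijections $X\to X$ continuous outside a finite subset of $X$. $\widehat{\operatorname{IET}^{\bowtie}}$ is the subgroup of bijections $f$ for which there is a finite partition of $X$ into intervals $[a,b[$ such that on each open interval $]a,b[$, $f$ is of the form $x\mapsto x+c$ or $x\mapsto -x+c$. *)

From Stdlib Require Import Reals List.
Open Scope R_scope.

Definition inX (x : R) : Prop := 0 <= x < 1.

(* Maps of X are represented by functions R -> R; only their values on X matter. *)
Definition bijX (f : R -> R) : Prop :=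
  (forall x, inX x -> inX (f x)) /\
  (forall x y, inX x -> inX y -> f x = f y -> x = y) /\
  (forall y, inX y -> exists x, inX x /\ f x = y).

Definition contX_at (f : R -> R) (x : R) : Prop :=
  forall eps, 0 < eps -> exists delta, 0 < delta /\
    forall y, inX y -> Rabs (y - x) < delta -> Rabs (f y - f x) < eps.

Definition PC_hat (f : R -> R) : Prop :=
  bijX f /\
  exists S : list R, (forall s, In s S -> inX s) /\
    forall x, inX x -> ~ In x S -> contX_at f x.

Definition IET_hat (f : R -> R) : Prop :=
  bijX f /\
  exists (n : nat) (a : nat -> R),
    a 0%nat = 0 /\ a n = 1 /\
    (forall i, (i < n)%nat -> a i < a (S i)) /\
    (forall i, (i < n)%nat -> exists c : R,
       (forall x, a i < x < a (S i) -> f x = x + c) \/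
       (forall x, a i < x < a (S i) -> f x = - x + c)).

Definition incr_homeoX (f : R -> R) : Prop :=
  bijX f /\
  (forall x y, inX x -> inX y -> x < y -> f x < f y) /\
  (forall x, inX x -> contX_at f x) /\
  exists g : R -> R,
    (forall x, inX x -> inX (g x) /\ g (f x) = x /\ f (g x) = x) /\
    (forall x, inX x -> contX_at g x).

From Stdlib Require Import Reals Lra Lia Psatz ClassicalEpsilon List Arith.
Open Scope R_scope.

(* On a partition 0 = a_0 < ... < a_n = 1 containing the discontinuities of h, h is
   continuous and injective, hence strictly monotone, on each piece ]a_k, a_(k+1)[,
   which it maps onto an interval ]c_k, d_k[.  These images are disjoint and cover X up
   to finitely many points, so their lengths add up to 1.  Laying the pieces side by side
   with lengths d_k - c_k gives an order-preserving homeomorphism phi such that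
   g = h o phi^-1 is an interval exchange; laying the images side by side with lengths
   a_(k+1) - a_k gives a homeomorphism theta such that f = theta o h is one, and
   psi = theta^-1.  Both phi and theta are finite sums of ramps, continuous
   nondecreasing maps that are constant off one piece and agree on it with h (or h^-1),
   or its negative, up to an additive constant. *)

Ltac case_minmax := repeat match goal with
  | |- context[Rmin ?a ?b] => let H := fresh in destruct (Rle_or_lt a b) as [H|H];
      [rewrite (Rmin_left a b H) in * | rewrite (Rmin_right a b (Rlt_le _ _ H)) in *]
  | |- context[Rmax ?a ?b] => let H := fresh in destruct (Rle_or_lt a b) as [H|H];
      [rewrite (Rmax_right a b H) in * | rewrite (Rmax_left a b (Rlt_le _ _ H)) in *]
  | H0 : context[Rmin ?a ?b] |- _ => let H := fresh in destruct (Rle_or_lt a b) as [H|H];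
      [rewrite (Rmin_left a b H) in * | rewrite (Rmin_right a b (Rlt_le _ _ H)) in *]
  | H0 : context[Rmax ?a ?b] |- _ => let H := fresh in destruct (Rle_or_lt a b) as [H|H];
      [rewrite (Rmax_right a b H) in * | rewrite (Rmax_left a b (Rlt_le _ _ H)) in *]
  end.

Lemma continuity_pt_intro f x0 :
  (forall eps, 0 < eps -> exists delta, 0 < delta /\
     forall x, Rabs (x - x0) < delta -> Rabs (f x - f x0) < eps) ->
  continuity_pt f x0.
Proof.
  intros H eps Heps. destruct (H eps Heps) as [delta [Hdelta Hclose]].
  exists delta; split; [lra|]. intros x [_ Hx]. apply Hclose, Hx.
Qed.

Lemma exists_between_notin (E : list R) u v :
  u < v -> exists t, u < t < v /\ ~ In t E.
Proof.
  revert u v; induction E as [|e E IH]; intros u v Huv.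
  - exists ((u + v) / 2). split; [lra | simpl; auto].
  - destruct (Rle_dec e ((u + v) / 2)).
    + destruct (IH ((u + v) / 2) v ltac:(lra)) as [t [Ht Hn]].
      exists t; split; [lra|]. intros [He|He]; [lra | auto].
    + destruct (IH u ((u + v) / 2) ltac:(lra)) as [t [Ht Hn]].
      exists t; split; [lra|]. intros [He|He]; [lra | auto].
Qed.

Fixpoint rsum (f : nat -> R) (n : nat) : R :=
  match n with O => 0 | S m => rsum f m + f m end.

Lemma rsum_ext f g n :
  (forall k, (k < n)%nat -> f k = g k) -> rsum f n = rsum g n.
Proof.
  induction n as [|n IH]; simpl; intros H; auto.
  rewrite IH by (intros; apply H; lia). rewrite H by lia. reflexivity.
Qed.

Lemma rsum_zero n : rsum (fun _ => 0) n = 0.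
Proof. induction n; simpl; lra. Qed.

Lemma rsum_plus f g n : rsum (fun k => f k + g k) n = rsum f n + rsum g n.
Proof. induction n; simpl; lra. Qed.

Lemma rsum_telescope a n : rsum (fun k => a (S k) - a k) n = a n - a O.
Proof. induction n as [|n IH]; simpl; [|rewrite IH]; lra. Qed.

Lemma rsum_le f g n :
  (forall k, (k < n)%nat -> f k <= g k) -> rsum f n <= rsum g n.
Proof.
  induction n as [|n IH]; simpl; intros H; [lra|].
  specialize (IH ltac:(intros; apply H; lia)). specialize (H n ltac:(lia)). lra.
Qed.

Lemma rsum_lt f g n j :
  (forall k, (k < n)%nat -> f k <= g k) -> (j < n)%nat -> f j < g j ->
  rsum f n < rsum g n.
Proof.
  induction n as [|n IH]; simpl; intros H Hj Hlt; [lia|].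
  assert (Hn := H n ltac:(lia)).
  destruct (Nat.eq_dec j n) as [->|Hjn].
  - assert (rsum f n <= rsum g n) by (apply rsum_le; intros; apply H; lia). lra.
  - assert (rsum f n < rsum g n) by (apply IH; [intros; apply H| |]; auto; lia). lra.
Qed.

Lemma rsum_sub_single f g n j :
  (forall k, (k < n)%nat -> k <> j -> f k = g k) -> (j < n)%nat ->
  rsum f n - rsum g n = f j - g j.
Proof.
  induction n as [|n IH]; simpl; intros H Hj; [lia|].
  destruct (Nat.eq_dec j n) as [->|Hjn].
  - rewrite (rsum_ext f g n) by (intros; apply H; lia). lra.
  - rewrite (H n) by lia. rewrite <- IH by (try intros; try apply H; lia). lra.
Qed.

Lemma rsum_single f n j :
  (forall k, (k < n)%nat -> k <> j -> f k = 0) -> (j < n)%nat -> rsum f n = f j.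
Proof.
  intros H Hj. pose proof (rsum_sub_single f (fun _ => 0) n j H Hj).
  rewrite rsum_zero in *. lra.
Qed.

Lemma rsum_continuity_pt (F : nat -> R -> R) n x0 :
  (forall k, (k < n)%nat -> continuity_pt (F k) x0) ->
  continuity_pt (fun x => rsum (fun k => F k x) n) x0.
Proof.
  induction n as [|n IH]; simpl; intros H.
  - apply continuity_pt_const. intros ? ?; reflexivity.
  - apply (continuity_pt_plus (fun x => rsum (fun k => F k x) n) (F n)).
    + apply IH; intros; apply H; lia.
    + apply H; lia.
Qed.

Lemma nondecreasing_onto_continuity_pt G lo hi :
  (forall x y, x <= y -> G x <= G y) ->
  (forall x, G lo <= G x <= G hi) ->
  (forall z, G lo <= z <= G hi -> exists x, G x = z) ->
  forall x0, continuity_pt G x0.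
Proof.
  intros Hm Hb Hs x0. apply continuity_pt_intro. intros eps Heps.
  assert (Hup : exists d2, 0 < d2 /\ forall x, x < x0 + d2 -> G x <= G x0 + eps / 2).
  { destruct (Rlt_dec (G x0) (G hi)).
    - destruct (Hs (Rmin (G x0 + eps / 2) (G hi))) as [x2 Hx2].
      { pose proof (Hb x0). case_minmax; lra. }
      assert (x0 < x2).
      { destruct (Rlt_dec x0 x2) as [|Hn]; auto.
        pose proof (Hm x2 x0 ltac:(lra)). case_minmax; lra. }
      exists (x2 - x0); split; [lra|]. intros x Hx.
      pose proof (Hm x x2 ltac:(lra)). pose proof (Rmin_l (G x0 + eps / 2) (G hi)). lra.
    - exists 1; split; [lra|]. intros x _. pose proof (Hb x). lra. }
  assert (Hlo : exists d1, 0 < d1 /\ forall x, x0 - d1 < x -> G x0 - eps / 2 <= G x).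
  { destruct (Rlt_dec (G lo) (G x0)).
    - destruct (Hs (Rmax (G x0 - eps / 2) (G lo))) as [x1 Hx1].
      { pose proof (Hb x0). case_minmax; lra. }
      assert (x1 < x0).
      { destruct (Rlt_dec x1 x0) as [|Hn]; auto.
        pose proof (Hm x0 x1 ltac:(lra)). case_minmax; lra. }
      exists (x0 - x1); split; [lra|]. intros x Hx.
      pose proof (Hm x1 x ltac:(lra)). pose proof (Rmax_l (G x0 - eps / 2) (G lo)). lra.
    - exists 1; split; [lra|]. intros x _. pose proof (Hb x). lra. }
  destruct Hup as [d2 [Hd2 Hu]], Hlo as [d1 [Hd1 Hl]].
  exists (Rmin d1 d2). split; [apply Rmin_glb_lt; auto|].
  intros x Hx. pose proof (Rmin_l d1 d2). pose proof (Rmin_r d1 d2).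
  apply Rabs_def2 in Hx. specialize (Hu x ltac:(lra)). specialize (Hl x ltac:(lra)).
  apply Rabs_def1; lra.
Qed.

Definition mono_onto (r : R -> R) (s : bool) (u v p q : R) : Prop :=
  (forall x, u < x < v -> p < r x < q) /\
  (forall y, p < y < q -> exists x, u < x < v /\ r x = y) /\
  (forall x y, u < x < v -> u < y < v -> x < y -> if s then r x < r y else r y < r x).

Lemma mono_onto_lt r s u v p q : u < v -> mono_onto r s u v p q -> p < q.
Proof. intros Huv [Hin _]. specialize (Hin ((u + v) / 2) ltac:(lra)). lra. Qed.

Definition ramp (r : R -> R) (s : bool) (u v p q x : R) : R :=
  if Rle_dec x u then 0 else if Rle_dec v x then q - p else
  if s then r x - p else q - r x.

Section Ramp.
Variables (r : R -> R) (s : bool) (u v p q : R).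
Hypothesis huv : u < v.
Hypothesis hr : mono_onto r s u v p q.

Lemma ramp_left x : x <= u -> ramp r s u v p q x = 0.
Proof. intros. unfold ramp. destruct Rle_dec; [auto | lra]. Qed.

Lemma ramp_right x : v <= x -> ramp r s u v p q x = q - p.
Proof. intros. unfold ramp. destruct Rle_dec; [lra|]. destruct Rle_dec; [auto | lra]. Qed.

Lemma ramp_mid x : u < x < v -> ramp r s u v p q x = if s then r x - p else q - r x.
Proof. intros. unfold ramp. destruct Rle_dec; [lra|]. destruct Rle_dec; [lra | auto]. Qed.

Lemma ramp_bounds x : 0 <= ramp r s u v p q x <= q - p.
Proof.
  pose proof (mono_onto_lt r s u v p q huv hr). destruct hr as [Hin _].
  unfold ramp. destruct Rle_dec; [lra|]. destruct Rle_dec; [lra|].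
  specialize (Hin x ltac:(lra)). destruct s; lra.
Qed.

Lemma ramp_lt x y : x < y -> x < v -> u < y -> ramp r s u v p q x < ramp r s u v p q y.
Proof.
  destruct hr as [Hin [_ Hmono]]. intros Hxy Hxv Huy.
  destruct (Rle_dec x u); [rewrite ramp_left by auto | rewrite (ramp_mid x) by lra];
  (destruct (Rle_dec v y); [rewrite ramp_right by auto | rewrite (ramp_mid y) by lra]).
  - pose proof (mono_onto_lt r s u v p q huv hr). lra.
  - specialize (Hin y ltac:(lra)). destruct s; lra.
  - specialize (Hin x ltac:(lra)). destruct s; lra.
  - specialize (Hmono x y ltac:(lra) ltac:(lra) Hxy). destruct s; lra.
Qed.

Lemma ramp_le x y : x <= y -> ramp r s u v p q x <= ramp r s u v p q y.
Proof.
  intros Hxy. destruct (Req_dec x y) as [->|]; [lra|].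
  destruct (Rle_dec v x); [rewrite !ramp_right by lra; lra|].
  destruct (Rle_dec y u); [rewrite !ramp_left by lra; lra|].
  apply Rlt_le, ramp_lt; lra.
Qed.

Lemma ramp_continuity_pt x0 : continuity_pt (ramp r s u v p q) x0.
Proof.
  pose proof hr as [_ [Hon _]].
  apply (nondecreasing_onto_continuity_pt _ u v); [apply ramp_le | |];
    rewrite (ramp_left u), (ramp_right v) by lra; [apply ramp_bounds|].
  intros z Hz.
  destruct (Req_dec z 0) as [->|]; [exists u; apply ramp_left; lra|].
  destruct (Req_dec z (q - p)) as [->|]; [exists v; apply ramp_right; lra|].
  destruct (Hon (if s then p + z else q - z)) as [x [Hx Hrx]]; [destruct s; lra|].
  exists x. rewrite ramp_mid by auto. destruct s; lra.
Qed.

End Ramp.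

Lemma increasing_onto_contX f :
  (forall x, inX x -> inX (f x)) ->
  (forall x y, inX x -> inX y -> x < y -> f x < f y) ->
  (forall y, inX y -> exists x, inX x /\ f x = y) ->
  forall x, inX x -> contX_at f x.
Proof.
  intros Hi Hm Hs x Hx eps Heps.
  assert (Hrefl : forall a b, inX a -> inX b -> f a < f b -> a < b).
  { intros a b Ha Hb Hab. destruct (Rtotal_order a b) as [|[->|Hba]]; [auto | lra|].
    specialize (Hm b a Hb Ha Hba). lra. }
  pose proof (Hi x Hx) as Hfx. unfold inX in *.
  set (y2 := Rmin (f x + eps / 2) ((f x + 1) / 2)).
  assert (Hy2 : f x < y2 /\ y2 <= f x + eps / 2 /\ inX y2).
  { unfold y2, inX. case_minmax; lra. }
  destruct (Hs y2 ltac:(tauto)) as [x2 [Hx2 Hfx2]].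
  assert (x < x2) by (apply Hrefl; auto; lra).
  assert (Hlow : exists d1, 0 < d1 /\ forall z, inX z -> x - d1 < z -> f x - eps < f z).
  { destruct (Rlt_dec 0 (f x)).
    - set (y1 := Rmax (f x - eps / 2) 0).
      assert (Hy1 : y1 < f x /\ f x - eps / 2 <= y1 /\ inX y1).
      { unfold y1, inX. case_minmax; lra. }
      destruct (Hs y1 ltac:(tauto)) as [x1 [Hx1 Hfx1]].
      assert (x1 < x) by (apply Hrefl; auto; lra).
      exists (x - x1); split; [lra|]. intros z Hz Hzl.
      pose proof (Hm x1 z Hx1 Hz ltac:(lra)). lra.
    - exists 1; split; [lra|]. intros z Hz _. pose proof (Hi z Hz). unfold inX in *. lra. }
  destruct Hlow as [d1 [Hd1 Hl]].
  exists (Rmin d1 (x2 - x)). split; [apply Rmin_glb_lt; lra|].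
  intros z Hz Hd. pose proof (Rmin_l d1 (x2 - x)). pose proof (Rmin_r d1 (x2 - x)).
  apply Rabs_def2 in Hd. specialize (Hl z Hz ltac:(lra)).
  pose proof (Hm z x2 Hz Hx2 ltac:(lra)). apply Rabs_def1; lra.
Qed.

Lemma bijX_inverse f : bijX f ->
  exists g, (forall y, inX y -> inX (g y) /\ f (g y) = y) /\
            (forall x, inX x -> g (f x) = x).
Proof.
  intros [Hi [Hinj Hs]].
  destruct (choice (fun y x => inX y -> inX x /\ f x = y)) as [g Hg].
  { intros y. destruct (classic (inX y)) as [Hy|Hy].
    - destruct (Hs y Hy) as [x Hx]. exists x; auto.
    - exists 0. intros; contradiction. }
  exists g. split; auto. intros x Hx. destruct (Hg (f x) (Hi x Hx)). apply Hinj; auto.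
Qed.

Lemma incr_homeoX_of_increasing_onto f :
  (forall x, inX x -> inX (f x)) ->
  (forall x y, inX x -> inX y -> x < y -> f x < f y) ->
  (forall y, inX y -> exists x, inX x /\ f x = y) ->
  incr_homeoX f.
Proof.
  intros Hi Hm Hs.
  assert (Hinj : forall x y, inX x -> inX y -> f x = f y -> x = y).
  { intros x y Hx Hy E. destruct (Rtotal_order x y) as [H|[H|H]]; auto.
    - specialize (Hm x y Hx Hy H). lra.
    - specialize (Hm y x Hy Hx H). lra. }
  assert (Hbij : bijX f) by (split; [|split]; auto).
  destruct (bijX_inverse f Hbij) as [g [Hfg Hgf]].
  assert (Hgm : forall x y, inX x -> inX y -> x < y -> g x < g y).
  { intros x y Hx Hy Hxy. destruct (Hfg x Hx) as [Hgx Ex], (Hfg y Hy) as [Hgy Ey].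
    destruct (Rtotal_order (g x) (g y)) as [H|[H|H]]; auto.
    - rewrite <- Ex, <- Ey, H in Hxy. lra.
    - specialize (Hm _ _ Hgy Hgx H). lra. }
  split; [auto | split; [auto | split; [apply increasing_onto_contX; auto|]]].
  exists g. split.
  - intros x Hx. destruct (Hfg x Hx). auto.
  - apply increasing_onto_contX; [apply Hfg | auto|].
    intros x Hx. exists (f x). auto.
Qed.

Lemma incr_homeoX_inverse f : incr_homeoX f ->
  exists g, incr_homeoX g /\ forall x, inX x -> inX (g x) /\ g (f x) = x /\ f (g x) = x.
Proof.
  intros [[Hi _] [Hm [_ [g [Hg _]]]]].
  exists g. split; auto. apply incr_homeoX_of_increasing_onto.
  - apply Hg.
  - intros x y Hx Hy Hxy. destruct (Hg x Hx) as [Hgx [_ Ex]], (Hg y Hy) as [Hgy [_ Ey]].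
    destruct (Rtotal_order (g x) (g y)) as [H|[H|H]]; auto.
    + rewrite <- Ex, <- Ey, H in Hxy. lra.
    + specialize (Hm _ _ Hgy Hgx H). lra.
  - intros y Hy. exists (f y). split; [auto | apply Hg; auto].
Qed.

Lemma bijX_comp f g : bijX f -> bijX g -> bijX (fun x => f (g x)).
Proof.
  intros [Hf1 [Hf2 Hf3]] [Hg1 [Hg2 Hg3]]. split; [|split]; auto.
  intros y Hy. destruct (Hf3 y Hy) as [z [Hz <-]]. destruct (Hg3 z Hz) as [x [Hx <-]].
  exists x. auto.
Qed.

Definition partitionX (n : nat) (a : nat -> R) : Prop :=
  a 0%nat = 0 /\ a n = 1 /\ (forall i, (i < n)%nat -> a i < a (S i)).

Section Partition.
Variables (n : nat) (a : nat -> R).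
Hypothesis ha : partitionX n a.

Lemma partitionX_lt i j : (i < j)%nat -> (j <= n)%nat -> a i < a j.
Proof.
  destruct ha as [_ [_ Hinc]]. intros Hij Hjn. induction j as [|j IH]; [lia|].
  destruct (Nat.eq_dec i j) as [->|]; [apply Hinc; lia|].
  specialize (IH ltac:(lia) ltac:(lia)). specialize (Hinc j ltac:(lia)). lra.
Qed.

Lemma partitionX_le i j : (i <= j)%nat -> (j <= n)%nat -> a i <= a j.
Proof.
  intros Hij Hjn. destruct (Nat.eq_dec i j) as [->|]; [lra|].
  apply Rlt_le, partitionX_lt; lia.
Qed.

Lemma partitionX_piece k : (k < n)%nat -> 0 <= a k /\ a k < a (S k) /\ a (S k) <= 1.
Proof.
  pose proof ha as [H0 [Hn _]]. intros Hk. rewrite <- H0, <- Hn.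
  repeat split; [apply partitionX_le | apply partitionX_lt | apply partitionX_le]; lia.
Qed.

Lemma partitionX_pieces_apart j k : (j < n)%nat -> (k < n)%nat -> j <> k ->
  a (S j) <= a k \/ a (S k) <= a j.
Proof.
  intros Hj Hk Hjk. destruct (le_lt_dec j k).
  - left. apply partitionX_le; lia.
  - right. apply partitionX_le; lia.
Qed.

Lemma partitionX_inner_not_node k i x : (k < n)%nat -> (i <= n)%nat ->
  a k < x < a (S k) -> a i <> x.
Proof.
  intros Hk Hi Hx <-. destruct (le_lt_dec i k).
  - pose proof (partitionX_le i k ltac:(lia) ltac:(lia)). lra.
  - pose proof (partitionX_le (S k) i ltac:(lia) ltac:(lia)). lra.
Qed.

Lemma partitionX_locate x : inX x -> exists j, (j < n)%nat /\ a j <= x < a (S j).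
Proof.
  destruct ha as [H0 [Hn _]]. intros Hx.
  assert (Hm : forall m, (m <= n)%nat -> x < a m ->
            exists j, (j < m)%nat /\ a j <= x < a (S j)).
  { induction m as [|m IH]; intros Hm Hxm; [unfold inX in Hx; lra|].
    destruct (Rlt_dec x (a m)).
    - destruct (IH ltac:(lia) ltac:(lra)) as [j Hj]. exists j; split; [lia | tauto].
    - exists m; split; [lia | lra]. }
  apply Hm; [lia|]. unfold inX in Hx. lra.
Qed.

End Partition.

Lemma partitionX_refining (S0 : list R) : (forall s, In s S0 -> inX s) ->
  exists n a, partitionX n a /\ forall s, In s S0 -> exists i, (i < n)%nat /\ a i = s.
Proof.
  induction S0 as [|s S0 IH]; intros HS.
  - exists 1%nat, (fun i => match i with O => 0 | _ => 1 end).
    split; [split; [auto | split; [auto|]] | intros s []].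
    intros i Hi. replace i with O by lia. lra.
  - destruct IH as [n [a [Ha Hmem]]]; [intros; apply HS; simpl; auto|].
    destruct (partitionX_locate n a Ha s ltac:(apply HS; simpl; auto)) as [j [Hj Hsj]].
    destruct (Req_dec (a j) s) as [Ejs|Ejs].
    { exists n, a. split; auto. intros t [<-|Ht]; [exists j | apply Hmem]; auto. }
    (* insert [s] between [a j] and [a (S j)] *)
    exists (S n), (fun i => if (i <=? j)%nat then a i else if (i =? S j)%nat then s else a (pred i)).
    destruct Ha as [H0 [Hn Hinc]]. split; [split; [|split]|].
    + auto.
    + destruct (Nat.leb_spec (S n) j); [lia|]. destruct (Nat.eqb_spec (S n) (S j)); [lia | auto].
    + intros i Hi.
      destruct (Nat.leb_spec i j), (Nat.leb_spec (S i) j),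
               (Nat.eqb_spec i (S j)), (Nat.eqb_spec (S i) (S j)); try lia.
      * apply Hinc; lia.
      * replace i with j by lia. lra.
      * replace i with (S j) by lia. simpl. lra.
      * destruct i; [lia|]. apply Hinc; lia.
    + intros t [<-|Ht].
      * exists (S j). split; [lia|].
        destruct (Nat.leb_spec (S j) j); [lia|]. rewrite Nat.eqb_refl. auto.
      * destruct (Hmem t Ht) as [i [Hin <-]]. destruct (Nat.leb_spec i j).
        -- exists i. split; [lia|]. destruct (Nat.leb_spec i j); [auto | lia].
        -- exists (S i). split; [lia|]. destruct (Nat.leb_spec (S i) j); [lia|].
           destruct (Nat.eqb_spec (S i) (S j)); [lia | auto].
Qed.

Definition overlap (c d u v : R) : R := Rmax 0 (Rmin d v - Rmax c u).

Lemma overlap_split c d u e v : c < d -> u <= e <= v ->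
  overlap c d u v = overlap c d u e + overlap c d e v.
Proof. intros. unfold overlap. case_minmax; lra. Qed.

Section DisjointCover.
Variables (n : nat) (c d : nat -> R).
Hypothesis hcd : forall k, (k < n)%nat -> c k < d k.
Hypothesis hdisj : forall j k t, (j < n)%nat -> (k < n)%nat -> j <> k ->
  c j < t < d j -> c k < t < d k -> False.

(* Induction on the finite exceptional set [E]: cutting ]u, v[ at a point of [E] splits
   every overlap, and when [E] is empty a single interval ]c k, d k[ contains ]u, v[. *)
Lemma rsum_overlap_cover (E : list R) u v : u < v ->
  (forall t, u < t < v -> In t E \/ exists k, (k < n)%nat /\ c k < t < d k) ->
  rsum (fun k => overlap (c k) (d k) u v) n = v - u.
Proof.
  revert u v; induction E as [|e E IH]; intros u v Huv Hcov.
  - destruct (Hcov ((u + v) / 2) ltac:(lra)) as [[]|[k [Hk Hck]]].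
    assert (Hc : c k <= u).
    { destruct (Rle_dec (c k) u); auto. exfalso.
      destruct (Hcov (c k) ltac:(lra)) as [[]|[j [Hj Hcj]]].
      destruct (Nat.eq_dec j k) as [->|]; [lra|].
      apply (hdisj j k ((c k + Rmin (d j) (d k)) / 2)); auto; case_minmax; lra. }
    assert (Hd : v <= d k).
    { destruct (Rle_dec v (d k)); auto. exfalso.
      destruct (Hcov (d k) ltac:(lra)) as [[]|[j [Hj Hcj]]].
      destruct (Nat.eq_dec j k) as [->|]; [lra|].
      apply (hdisj j k ((d k + Rmax (c j) (c k)) / 2)); auto; case_minmax; lra. }
    rewrite (rsum_single _ n k); auto; [unfold overlap; case_minmax; lra|].
    intros j Hj Hjk. unfold overlap.
    destruct (Rle_dec (Rmin (d j) v - Rmax (c j) u) 0) as [|Hpos]; [apply Rmax_left; auto|].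
    exfalso. pose proof (hcd j Hj).
    apply (hdisj j k ((Rmin (d j) v + Rmax (c j) u) / 2)); auto; revert Hpos; case_minmax; lra.
  - assert (Hcov' : forall t, u < t < v -> t <> e ->
              In t E \/ exists k, (k < n)%nat /\ c k < t < d k).
    { intros t Ht Hte. destruct (Hcov t Ht) as [[H|H]|H]; auto. congruence. }
    destruct (Rlt_dec u e); [destruct (Rlt_dec e v)|].
    + rewrite (rsum_ext _ (fun k => overlap (c k) (d k) u e + overlap (c k) (d k) e v))
        by (intros k Hk; apply overlap_split; [apply hcd; auto | lra]).
      rewrite rsum_plus, (IH u e), (IH e v); try lra;
        intros t Ht; apply Hcov'; lra.
    + apply IH; auto. intros t Ht. apply Hcov'; lra.
    + apply IH; auto. intros t Ht. apply Hcov'; lra.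
Qed.

End DisjointCover.

(** * Continuous injective maps on an interval *)

Section ContinuousInjective.
Variables (h : R -> R) (al be : R).
Hypothesis hab : 0 <= al < be.
Hypothesis hbe : be <= 1.
Hypothesis hinto : forall x, al < x < be -> inX (h x).
Hypothesis hinj : forall x y, al < x < be -> al < y < be -> h x = h y -> x = y.
Hypothesis hcont : forall x, al < x < be -> contX_at h x.

(* [IVT_cor] applies to [h] composed with the clamp onto [x1, x2]. *)
Lemma IVT_contX x1 x2 y : al < x1 -> x1 <= x2 -> x2 < be ->
  (h x1 - y) * (h x2 - y) <= 0 -> exists t, x1 <= t <= x2 /\ h t = y.
Proof.
  intros H1 H12 H2 Hsign.
  set (cl := fun t => Rmax x1 (Rmin t x2)).
  assert (Hcl : forall t, x1 <= cl t <= x2) by (intros t; unfold cl; case_minmax; lra).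
  assert (Hcl_id : forall t, x1 <= t <= x2 -> cl t = t) by (intros t Ht; unfold cl; case_minmax; lra).
  assert (Hlip : forall t t0, Rabs (cl t - cl t0) <= Rabs (t - t0)).
  { intros t t0. unfold cl. case_minmax; unfold Rabs; repeat destruct Rcase_abs; lra. }
  destruct (IVT_cor (fun t => h (cl t) - y) x1 x2) as [z [Hz Hhz]]; auto.
  - intros t0. apply continuity_pt_intro. intros eps Heps. pose proof (Hcl t0).
    destruct (hcont (cl t0) ltac:(lra) eps Heps) as [delta [Hdelta Hd]].
    exists delta; split; auto. intros t Ht.
    replace (h (cl t) - y - (h (cl t0) - y)) with (h (cl t) - h (cl t0)) by ring.
    apply Hd; [pose proof (Hcl t); unfold inX; lra | pose proof (Hlip t t0); lra].
  - rewrite !Hcl_id by lra. auto.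
  - exists z. split; auto. rewrite Hcl_id in Hhz by auto. lra.
Qed.

Lemma contX_injective_between p q r : al < p -> p < q -> q < r -> r < be ->
  (h p < h q < h r) \/ (h r < h q < h p).
Proof.
  intros Hp Hpq Hqr Hr.
  assert (Hne : forall x y, al < x < be -> al < y < be -> x <> y -> h x <> h y).
  { intros x y Hx Hy Hxy E. apply Hxy, hinj; auto. }
  pose proof (Hne p q ltac:(lra) ltac:(lra) ltac:(lra)).
  pose proof (Hne q r ltac:(lra) ltac:(lra) ltac:(lra)).
  pose proof (Hne p r ltac:(lra) ltac:(lra) ltac:(lra)).
  (* otherwise [h] takes the value [h r] on [p, q] or the value [h p] on [q, r] *)
  assert (Hr_out : ~ (h p - h r) * (h q - h r) <= 0).
  { intros Hs. destruct (IVT_contX p q (h r)) as [t [Ht Et]]; try lra.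
    apply hinj in Et; lra. }
  assert (Hp_out : ~ (h q - h p) * (h r - h p) <= 0).
  { intros Hs. destruct (IVT_contX q r (h p)) as [t [Ht Et]]; try lra.
    apply hinj in Et; lra. }
  destruct (Rlt_dec (h p) (h q)), (Rlt_dec (h q) (h r)), (Rlt_dec (h p) (h r));
    try lra; exfalso; (apply Hr_out + apply Hp_out); nra.
Qed.

Lemma contX_injective_strict_mono : exists s : bool,
  forall x y, al < x < be -> al < y < be -> x < y -> if s then h x < h y else h y < h x.
Proof.
  set (x0 := (2 * al + be) / 3). set (y0 := (al + 2 * be) / 3).
  exists (if Rlt_dec (h x0) (h y0) then true else false).
  intros x y Hx Hy Hxy.
  (* compare both pairs with a pair [w < z] enclosing them *)
  set (w := (al + Rmin x x0) / 2). set (z := (be + Rmax y y0) / 2).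
  assert (al < w < x /\ w < x0 /\ y < z /\ y0 < z /\ z < be)
    by (unfold w, z, x0, y0; case_minmax; lra).
  destruct (contX_injective_between x y z), (contX_injective_between w x z),
           (contX_injective_between w x0 z), (contX_injective_between x0 y0 z);
    unfold x0, y0 in *; try lra; destruct Rlt_dec; lra.
Qed.

Lemma contX_injective_no_extremum x : al < x < be ->
  exists x1 x2, al < x1 < be /\ al < x2 < be /\ h x1 < h x < h x2.
Proof.
  destruct contX_injective_strict_mono as [s Hs]. intros Hx.
  pose proof (Hs ((al + x) / 2) x ltac:(lra) Hx ltac:(lra)).
  pose proof (Hs x ((x + be) / 2) Hx ltac:(lra) ltac:(lra)).
  destruct s; [exists ((al + x) / 2), ((x + be) / 2) | exists ((x + be) / 2), ((al + x) / 2)];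
    repeat split; lra.
Qed.

Lemma contX_injective_mono_onto : exists c d s, 0 <= c /\ d <= 1 /\ mono_onto h s al be c d.
Proof.
  destruct contX_injective_strict_mono as [s Hs].
  set (Eu := fun y => exists x, al < x < be /\ y = h x).
  set (El := fun y => exists x, al < x < be /\ y = - h x).
  assert (Hmid : al < (al + be) / 2 < be) by lra.
  assert (Hrange : forall x, al < x < be -> 0 <= h x < 1) by exact hinto.
  destruct (completeness Eu) as [d [Hd_ub Hd_lub]].
  { exists 1. intros y [x [Hx ->]]. specialize (Hrange x Hx). lra. }
  { exists (h ((al + be) / 2)), ((al + be) / 2). auto. }
  destruct (completeness El) as [mc [Hc_ub Hc_lub]].
  { exists 0. intros y [x [Hx ->]]. specialize (Hrange x Hx). lra. }
  { exists (- h ((al + be) / 2)), ((al + be) / 2). auto. }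
  assert (Hle : forall x, al < x < be -> - mc <= h x <= d).
  { intros x Hx. split.
    - assert (El (- h x)) as Hin by (exists x; auto). specialize (Hc_ub _ Hin). lra.
    - apply Hd_ub. exists x; auto. }
  exists (- mc), d, s. split; [|split; [|split; [|split]]].
  - assert (mc <= 0); [|lra]. apply Hc_lub. intros y [x [Hx ->]]. specialize (Hrange x Hx). lra.
  - apply Hd_lub. intros y [x [Hx ->]]. specialize (Hrange x Hx). lra.
  - intros x Hx. destruct (contX_injective_no_extremum x Hx) as [x1 [x2 [Hx1 [Hx2 H12]]]].
    pose proof (Hle x1 Hx1). pose proof (Hle x2 Hx2). lra.
  - intros y Hy.
    assert (exists x2, al < x2 < be /\ y < h x2) as [x2 [Hx2 H2]].
    { apply NNPP. intro N. assert (d <= y); [|lra]. apply Hd_lub. intros z [x [Hx ->]].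
      destruct (Rle_dec (h x) y); auto. exfalso. apply N. exists x. split; auto. lra. }
    assert (exists x1, al < x1 < be /\ h x1 < y) as [x1 [Hx1 H1]].
    { apply NNPP. intro N. assert (mc <= - y); [|lra]. apply Hc_lub. intros z [x [Hx ->]].
      destruct (Rle_dec y (h x)); [lra|]. exfalso. apply N. exists x. split; auto. lra. }
    destruct (Rle_dec x1 x2).
    + destruct (IVT_contX x1 x2 y) as [t [Ht Et]]; try lra; [nra|].
      exists t. split; auto; lra.
    + destruct (IVT_contX x2 x1 y) as [t [Ht Et]]; try lra; [nra|].
      exists t. split; auto; lra.
  - exact Hs.
Qed.

End ContinuousInjective.

(** * Sums of ramps *)

Definition ramp_sum (n : nat) (U V P Q : nat -> R) (r : nat -> R -> R) (s : nat -> bool)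
  (x : R) : R :=
  rsum (fun k => ramp (r k) (s k) (U k) (V k) (P k) (Q k) x) n.

Section RampSum.
Variables (n : nat) (U V P Q : nat -> R) (r : nat -> R -> R) (s : nat -> bool).
Hypothesis hpieces : forall k, (k < n)%nat ->
  0 <= U k /\ U k < V k /\ V k <= 1 /\ mono_onto (r k) (s k) (U k) (V k) (P k) (Q k).
Hypothesis hapart : forall j k, (j < n)%nat -> (k < n)%nat -> j <> k -> V j <= U k \/ V k <= U j.
Hypothesis hlengths : rsum (fun k => Q k - P k) n = 1.
Hypothesis hcover : forall x y, 0 <= x -> x < y -> y <= 1 ->
  exists k, (k < n)%nat /\ x < V k /\ U k < y.

Let Phi := ramp_sum n U V P Q r s.

Lemma ramp_sum_0 : Phi 0 = 0.
Proof.
  unfold Phi, ramp_sum. transitivity (rsum (fun _ => 0) n); [apply rsum_ext | apply rsum_zero].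
  intros k Hk. apply ramp_left; apply hpieces; auto.
Qed.

Lemma ramp_sum_1 : Phi 1 = 1.
Proof.
  unfold Phi, ramp_sum. transitivity (rsum (fun k => Q k - P k) n); [apply rsum_ext | auto].
  intros k Hk. destruct (hpieces k Hk) as [_ [Huv [HV Hr]]]. apply ramp_right; auto.
Qed.

Lemma ramp_sum_le x y : x <= y -> Phi x <= Phi y.
Proof.
  intros Hxy. apply rsum_le. intros k Hk.
  destruct (hpieces k Hk) as [_ [Huv [_ Hr]]]. apply ramp_le; auto.
Qed.

Lemma ramp_sum_lt x y : 0 <= x -> x < y -> y <= 1 -> Phi x < Phi y.
Proof.
  intros Hx Hxy Hy. destruct (hcover x y Hx Hxy Hy) as [j [Hj [HxV HUy]]].
  apply (rsum_lt _ _ n j); auto.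
  - intros k Hk. destruct (hpieces k Hk) as [_ [Huv [_ Hr]]]. apply ramp_le; auto; lra.
  - destruct (hpieces j Hj) as [_ [Huv [_ Hr]]]. apply ramp_lt; auto.
Qed.

Lemma ramp_sum_incr_homeoX : incr_homeoX Phi.
Proof.
  pose proof ramp_sum_0. pose proof ramp_sum_1.
  apply incr_homeoX_of_increasing_onto.
  - intros x [Hx0 Hx1]. split; [rewrite <- ramp_sum_0; apply ramp_sum_le; auto|].
    rewrite <- ramp_sum_1. apply ramp_sum_lt; lra.
  - intros x y [Hx0 Hx1] [Hy0 Hy1] Hxy. apply ramp_sum_lt; lra.
  - intros y [Hy0 Hy1].
    destruct (IVT_cor (fun t => Phi t - y) 0 1) as [z [Hz Ez]]; [| lra | nra |].
    + intros t. apply (continuity_pt_minus Phi (fun _ => y));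
        [| apply continuity_pt_const; intros ? ?; reflexivity].
      apply rsum_continuity_pt. intros k Hk.
      destruct (hpieces k Hk) as [_ [Huv [_ Hr]]]. apply ramp_continuity_pt; auto.
    + exists z. destruct (Req_dec z 1) as [->|]; [lra | split; [unfold inX|]; lra].
Qed.

(* Only the [k]-th ramp varies on [U k, V k]; the others are constant there. *)
Lemma ramp_sum_on_piece k x : (k < n)%nat -> U k < x < V k ->
  Phi x = Phi (U k) + (if s k then r k x - P k else Q k - r k x).
Proof.
  intros Hk Hx. destruct (hpieces k Hk) as [_ [Huv [_ Hr]]].
  assert (H0 : ramp (r k) (s k) (U k) (V k) (P k) (Q k) (U k) = 0) by (apply ramp_left; lra).
  rewrite <- (ramp_mid (r k) (s k) (U k) (V k) (P k) (Q k) x) by auto.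
  enough (Phi x - Phi (U k) = ramp (r k) (s k) (U k) (V k) (P k) (Q k) x
                            - ramp (r k) (s k) (U k) (V k) (P k) (Q k) (U k)) by lra.
  unfold Phi, ramp_sum.
  apply (rsum_sub_single (fun j => ramp (r j) (s j) (U j) (V j) (P j) (Q j) x)
                         (fun j => ramp (r j) (s j) (U j) (V j) (P j) (Q j) (U k))); auto.
  intros j Hj Hjk.
  destruct (hpieces j Hj) as [_ [Huvj _]].
  destruct (hapart j k Hj Hk Hjk); [rewrite !ramp_right | rewrite !ramp_left]; auto; lra.
Qed.

End RampSum.

Lemma PC_hat_piecewise_mono h : PC_hat h ->
  exists n a c d (sg : nat -> bool), partitionX n a /\
    forall k, (k < n)%nat -> 0 <= c k /\ d k <= 1 /\ mono_onto h (sg k) (a k) (a (S k)) (c k) (d k).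
Proof.
  intros [[Hinto [Hinj _]] [S0 [HS Hcont]]].
  destruct (partitionX_refining S0 HS) as [n [a [Ha Hmem]]].
  assert (Hpiece : forall k, exists t : R * R * bool, (k < n)%nat ->
            0 <= fst (fst t) /\ snd (fst t) <= 1 /\
            mono_onto h (snd t) (a k) (a (S k)) (fst (fst t)) (snd (fst t))).
  { intros k. destruct (lt_dec k n) as [Hk|Hk]; [|exists (0, 0, true); intros; lia].
    pose proof (partitionX_piece n a Ha k Hk).
    assert (HX : forall x, a k < x < a (S k) -> inX x) by (intros; unfold inX; lra).
    destruct (contX_injective_mono_onto h (a k) (a (S k))) as [c [d [s Hs]]];
      [lra | lra | intros; apply Hinto, HX; auto | intros; apply Hinj; auto | |].
    - intros x Hx. apply Hcont; auto. intros Hin.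
      destruct (Hmem x Hin) as [i [Hi Ei]].
      apply (partitionX_inner_not_node n a Ha k i x); auto; lia.
    - exists (c, d, s). auto. }
  destruct (choice _ Hpiece) as [t Ht].
  exists n, a, (fun k => fst (fst (t k))), (fun k => snd (fst (t k))), (fun k => snd (t k)).
  auto.
Qed.

(** * Straightening a piecewise monotone bijection *)

Section Straightening.
Variables (h hinv : R -> R) (n : nat) (a c d : nat -> R) (sg : nat -> bool).
Hypothesis hbij : bijX h.
Hypothesis hinv_l : forall x, inX x -> hinv (h x) = x.
Hypothesis ha : partitionX n a.
Hypothesis hpieces : forall k, (k < n)%nat ->
  0 <= c k /\ d k <= 1 /\ mono_onto h (sg k) (a k) (a (S k)) (c k) (d k).

Lemma piece_inX k x : (k < n)%nat -> a k < x < a (S k) -> inX x.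
Proof. intros Hk Hx. pose proof (partitionX_piece n a ha k Hk). unfold inX. lra. Qed.

Lemma image_piece_lt k : (k < n)%nat -> c k < d k.
Proof.
  intros Hk. pose proof (partitionX_piece n a ha k Hk).
  apply (mono_onto_lt h (sg k) (a k) (a (S k))); [lra | apply hpieces; auto].
Qed.

Lemma image_pieces_apart j k : (j < n)%nat -> (k < n)%nat -> j <> k ->
  d j <= c k \/ d k <= c j.
Proof.
  intros Hj Hk Hjk.
  destruct (Rle_dec (d j) (c k)); [auto|]. destruct (Rle_dec (d k) (c j)); [auto|]. exfalso.
  pose proof (image_piece_lt j Hj). pose proof (image_piece_lt k Hk).
  set (t := (Rmax (c j) (c k) + Rmin (d j) (d k)) / 2).
  destruct (hpieces j Hj) as [_ [_ [_ [Honj _]]]], (hpieces k Hk) as [_ [_ [_ [Honk _]]]].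
  destruct (Honj t) as [x [Hx Ex]]; [unfold t; case_minmax; lra|].
  destruct (Honk t) as [x' [Hx' Ex']]; [unfold t; case_minmax; lra|].
  assert (x = x') as <-.
  { destruct hbij as [_ [Hinj _]]. apply Hinj; [apply (piece_inX j) | apply (piece_inX k) |];
      auto; congruence. }
  destruct (partitionX_pieces_apart n a ha j k); auto; lra.
Qed.

Lemma image_pieces_cover t : inX t ->
  In t (map (fun i => h (a i)) (seq 0 n)) \/ exists k, (k < n)%nat /\ c k < t < d k.
Proof.
  intros Ht. destruct hbij as [_ [_ Hsurj]]. destruct (Hsurj t Ht) as [x [Hx <-]].
  destruct (partitionX_locate n a ha x Hx) as [j [Hj [Hjx Hxj]]].
  destruct (Req_dec (a j) x) as [<-|].
  - left. apply (in_map (fun i => h (a i))), in_seq. lia.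
  - right. exists j. split; auto. apply hpieces; auto. lra.
Qed.

Lemma image_lengths : rsum (fun k => d k - c k) n = 1.
Proof.
  pose proof (image_piece_lt) as Hlt.
  transitivity (rsum (fun k => overlap (c k) (d k) 0 1) n).
  - apply rsum_ext. intros k Hk. pose proof (Hlt k Hk).
    destruct (hpieces k Hk) as [Hc [Hd _]]. unfold overlap. case_minmax; lra.
  - rewrite (rsum_overlap_cover n c d) with (E := map (fun i => h (a i)) (seq 0 n)); auto; try lra.
    + intros j k t Hj Hk Hjk. destruct (image_pieces_apart j k Hj Hk Hjk); lra.
    + intros t Ht. apply image_pieces_cover. unfold inX. lra.
Qed.

Lemma hinv_on_image k y : (k < n)%nat -> c k < y < d k ->
  a k < hinv y < a (S k) /\ h (hinv y) = y.
Proof.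
  intros Hk Hy. destruct (hpieces k Hk) as [_ [_ [_ [Hon _]]]].
  destruct (Hon y Hy) as [x [Hx <-]]. rewrite hinv_l by (apply (piece_inX k); auto). auto.
Qed.

Lemma hinv_mono_onto k : (k < n)%nat -> mono_onto hinv (sg k) (c k) (d k) (a k) (a (S k)).
Proof.
  intros Hk. destruct (hpieces k Hk) as [_ [_ [Hin [_ Hmono]]]].
  split; [|split].
  - intros y Hy. apply hinv_on_image; auto.
  - intros x Hx. exists (h x). split; auto. apply hinv_l, (piece_inX k); auto.
  - intros y y' Hy Hy' Hyy'.
    destruct (hinv_on_image k y Hk Hy) as [Hx Ex], (hinv_on_image k y' Hk Hy') as [Hx' Ex'].
    destruct (Rtotal_order (hinv y) (hinv y')) as [Hlt|[Heq|Hlt]].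
    + specialize (Hmono _ _ Hx Hx' Hlt). destruct (sg k); auto. lra.
    + rewrite <- Ex, <- Ex', Heq in Hyy'. lra.
    + specialize (Hmono _ _ Hx' Hx Hlt). destruct (sg k); auto. lra.
Qed.

Definition pre_straightener : R -> R :=
  ramp_sum n a (fun k => a (S k)) c d (fun _ => h) sg.

Definition post_straightener : R -> R :=
  ramp_sum n c d a (fun k => a (S k)) (fun _ => hinv) sg.

Lemma pre_ramp_pieces k : (k < n)%nat ->
  0 <= a k /\ a k < a (S k) /\ a (S k) <= 1 /\ mono_onto h (sg k) (a k) (a (S k)) (c k) (d k).
Proof. intros Hk. pose proof (partitionX_piece n a ha k Hk). split; [|split; [|split]]; try lra. apply hpieces; auto. Qed.

Lemma pre_ramp_cover x y : 0 <= x -> x < y -> y <= 1 ->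
  exists k, (k < n)%nat /\ x < a (S k) /\ a k < y.
Proof.
  intros Hx Hxy Hy. destruct (partitionX_locate n a ha x ltac:(unfold inX; lra)) as [k [Hk Hxk]].
  exists k. split; [auto | lra].
Qed.

Lemma post_ramp_pieces k : (k < n)%nat ->
  0 <= c k /\ c k < d k /\ d k <= 1 /\ mono_onto hinv (sg k) (c k) (d k) (a k) (a (S k)).
Proof.
  intros Hk. pose proof (image_piece_lt k Hk). destruct (hpieces k Hk) as [Hc [Hd _]].
  split; [|split; [|split]]; auto. apply hinv_mono_onto; auto.
Qed.

Lemma post_ramp_cover x y : 0 <= x -> x < y -> y <= 1 ->
  exists k, (k < n)%nat /\ x < d k /\ c k < y.
Proof.
  intros Hx Hxy Hy.
  destruct (exists_between_notin (map (fun i => h (a i)) (seq 0 n)) x y Hxy) as [t [Ht HtE]].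
  destruct (image_pieces_cover t ltac:(unfold inX; lra)) as [|[k [Hk Htk]]]; [contradiction|].
  exists k. split; [auto | lra].
Qed.

Lemma post_ramp_lengths : rsum (fun k => a (S k) - a k) n = 1.
Proof. destruct ha as [H0 [Hn _]]. rewrite rsum_telescope. lra. Qed.

Lemma pre_straightener_incr_homeoX : incr_homeoX pre_straightener.
Proof.
  apply ramp_sum_incr_homeoX; [apply pre_ramp_pieces | apply image_lengths | apply pre_ramp_cover].
Qed.

Lemma post_straightener_incr_homeoX : incr_homeoX post_straightener.
Proof.
  apply ramp_sum_incr_homeoX;
    [apply post_ramp_pieces | apply post_ramp_lengths | apply post_ramp_cover].
Qed.

Lemma IET_post_straightener_comp : IET_hat (fun x => post_straightener (h x)).
Proof.
  split; [apply bijX_comp; [apply post_straightener_incr_homeoX | auto]|].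
  pose proof ha as [H0 [Hn Hinc]].
  exists n, a. split; [auto | split; [auto | split; [auto|]]].
  intros k Hk.
  assert (Hloc : forall x, a k < x < a (S k) -> post_straightener (h x) =
            post_straightener (c k) + (if sg k then x - a k else a (S k) - x)).
  { intros x Hx. destruct (hpieces k Hk) as [_ [_ [Hin _]]].
    unfold post_straightener.
    rewrite (ramp_sum_on_piece n c d a (fun k => a (S k)) (fun _ => hinv) sg
               post_ramp_pieces image_pieces_apart k (h x)) by auto.
    rewrite hinv_l by (apply (piece_inX k); auto). reflexivity. }
  revert Hloc. destruct (sg k); intros Hloc;
    [exists (post_straightener (c k) - a k); left | exists (post_straightener (c k) + a (S k)); right];
    intros x Hx; rewrite Hloc by auto; ring.
Qed.

Lemma IET_comp_pre_straightener_inv phi' : incr_homeoX phi' ->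
  (forall y, inX y -> pre_straightener (phi' y) = y) -> IET_hat (fun y => h (phi' y)).
Proof.
  intros Hphi' Hinv.
  pose proof (ramp_sum_0 n a (fun k => a (S k)) c d (fun _ => h) sg pre_ramp_pieces) as Hphi0.
  pose proof (ramp_sum_1 n a (fun k => a (S k)) c d (fun _ => h) sg pre_ramp_pieces image_lengths) as Hphi1.
  pose proof (ramp_sum_le n a (fun k => a (S k)) c d (fun _ => h) sg pre_ramp_pieces) as Hle.
  pose proof (ramp_sum_lt n a (fun k => a (S k)) c d (fun _ => h) sg pre_ramp_pieces
                pre_ramp_cover) as Hlt.
  fold pre_straightener in Hphi0, Hphi1, Hle, Hlt.
  split; [apply bijX_comp; [auto | apply Hphi']|].
  pose proof ha as [H0 [Hn _]].
  exists n, (fun i => pre_straightener (a i)).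
  split; [rewrite H0; auto | split; [rewrite Hn; auto | split]].
  { intros i Hi. pose proof (partitionX_piece n a ha i Hi). apply Hlt; lra. }
  intros k Hk. pose proof (partitionX_piece n a ha k Hk).
  assert (Hloc : forall y, pre_straightener (a k) < y < pre_straightener (a (S k)) ->
            y = pre_straightener (a k) + (if sg k then h (phi' y) - c k else d k - h (phi' y))).
  { intros y Hy.
    assert (HyX : inX y) by (pose proof (Hle 0 (a k)); pose proof (Hle (a (S k)) 1); unfold inX; lra).
    specialize (Hinv y HyX).
    assert (Hx : a k < phi' y < a (S k)).
    { split; apply Rnot_le_lt; intros Hn';
        [pose proof (Hle _ _ Hn') | pose proof (Hle _ _ Hn')]; lra. }
    rewrite <- Hinv at 1. unfold pre_straightener.
    apply (ramp_sum_on_piece n a (fun k => a (S k)) c d (fun _ => h) sg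
             pre_ramp_pieces (partitionX_pieces_apart n a ha) k); auto. }
  revert Hloc. destruct (sg k); intros Hloc;
    [exists (c k - pre_straightener (a k)); left | exists (d k + pre_straightener (a k)); right];
    intros y Hy; specialize (Hloc y Hy); lra.
Qed.

End Straightening.

Theorem proposition2p5 (h : R -> R) :
  PC_hat h ->
  exists (phi psi f g : R -> R),
    incr_homeoX phi /\ incr_homeoX psi /\ IET_hat f /\ IET_hat g /\
    (forall x, inX x -> h x = psi (f x)) /\
    (forall x, inX x -> h x = g (phi x)).
Proof.
  intros Hh. pose proof (proj1 Hh) as Hbij.
  destruct (PC_hat_piecewise_mono h Hh) as (n & a & c & d & sg & Ha & Hpieces).
  destruct (bijX_inverse h Hbij) as (hinv & _ & Hhinv).
  pose proof (pre_straightener_incr_homeoX h n a c d sg Hbij Ha Hpieces) as Hphi.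
  pose proof (post_straightener_incr_homeoX h hinv n a c d sg Hbij Hhinv Ha Hpieces) as Htheta.
  destruct (incr_homeoX_inverse _ Hphi) as (phi' & Hphi' & Hphi'_inv).
  destruct (incr_homeoX_inverse _ Htheta) as (psi & Hpsi & Hpsi_inv).
  exists (pre_straightener h n a c d sg), psi,
    (fun x => post_straightener hinv n a c d sg (h x)), (fun y => h (phi' y)).
  split; [|split; [|split; [|split; [|split]]]]; auto.
  - exact (IET_post_straightener_comp h hinv n a c d sg Hbij Hhinv Ha Hpieces).
  - apply (IET_comp_pre_straightener_inv h n a c d sg Hbij Ha Hpieces phi' Hphi').
    intros y Hy. apply Hphi'_inv; auto.
  - intros x Hx. symmetry. apply Hpsi_inv, Hbij; auto.
  - intros x Hx. f_equal. symmetry. apply Hphi'_inv; auto.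
Qed.
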